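(* Let $0<r<s<\infty$, $\theta\in[0,\frac18)$, and let $f\colon[r,s]\to\mathbb R$ be non-decreasing and right-continuous. Then for every measurable $E\subset[r,s]$ with $\mathscr{L}^{1}(E)<\theta(s-r)$ there exist $r<\tilde r<\tilde s<s$ with $\tilde r,\tilde s\notin E$ such that, for $a\in\{\tilde r,\tilde s\}$, \[ \frac{f(a)-f(\tau)}{a-\tau}\leq\frac{800}{1-8\theta}\frac{f(s)-f(r)}{s-r}\ \text{ for all }\tau\in[r,a),\qquad \frac{f(\tau)-f(a)}{\tau-a}\leq\frac{800}{1-8\theta}\frac{f(s)-f(r)}{s-r}\ \text{ for all }\tau\in(a,s], \] and $(\tilde s-\tilde r)\leq(s-r)\leq8(\tilde s-\tilde r)$. *)

From HB Require Import structures.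
From mathcomp Require Import all_boot all_order all_algebra.
From mathcomp Require Import all_classical all_reals all_analysis.

(* Lebesgue-measurable subsets of R (the completed, i.e. Caratheodory,
   sigma-algebra of the Lebesgue measure) and the (completed) Lebesgue
   measure L^1 on them. *)
Definition Lmeasurable {R : realType} (E : set R) : Prop :=
  measurable (E : set (caratheodory_type (R:=R) (wlength (@idfun R))^*%mu)).

Definition Lmeasure {R : realType} (E : set R) : \bar R :=
  @completed_lebesgue_measure R E.

From HB Require Import structures.
From mathcomp Require Import all_boot all_order all_algebra.
From mathcomp Require Import all_classical all_reals all_analysis.
From mathcomp Require Import ring lra measurable_realfun.
Import Order.TTheory GRing.Theory Num.Theory.
Import numFieldNormedType.Exports.
Local Open Scope classical_set_scope.
Local Open Scope ring_scope.

(* Let λ := 800/(1 - 8θ) · (f s - f r)/(s - r) and call a ball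
   ]c - ρ, c + ρ[ ⊆ [r, s] steep when f increases by more than 2ρλ on it.
   At a point a of ]r, s[ outside the union H of the steep balls every
   difference quotient of f based at a is at most λ: otherwise a slightly
   widened interval would be a steep ball around a. By the Vitali covering
   lemma a compact subset of H is covered by the threefold enlargements of
   finitely many disjoint steep balls, whose diameters add up to at most
   (f s - f r)/λ because f is non-decreasing; by inner regularity
   |H| <= 3 (f s - f r)/λ = 3(1 - 8θ)(s - r)/800. Hence |E| + |H| < (s - r)/4,
   so E ∪ H misses a point of ]r, r + (s - r)/4[ and a point of
   ]s - (s - r)/4, s[. *)

Lemma exists_argmax_seq {R : realDomainType} {T : eqType} (g : T -> R)
    (D : seq T) :
  D != [::] -> exists2 j, j \in D & forall k, k \in D -> g k <= g j.
Proof.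
elim: D => // a D IH _; have [->|/IH[j jD jmax]] := eqVneq D [::].
  by exists a; rewrite ?mem_head // => k; rewrite inE => /eqP ->.
have [ja|aj] := leP (g j) (g a).
  exists a; first exact: mem_head.
  by move=> k; rewrite inE => /predU1P[->//|/jmax/le_trans]; apply.
exists j; first by rewrite inE jD orbT.
by move=> k; rewrite inE => /predU1P[->|/jmax//]; exact: ltW.
Qed.

Lemma disjoint_balls_le {R : realFieldType} (i j : R * R) :
  0 < j.2 -> i.1 - i.2 <= j.1 - j.2 ->
  ~ (ball i.1 i.2 `&` ball j.1 j.2 !=set0) -> i.1 + i.2 <= j.1 - j.2.
Proof.
move=> j2_gt0 ij; rewrite leNgt => /contra_notN; apply => ji.
exists ((j.1 - j.2 + Num.min (i.1 + i.2) (j.1 + j.2)) / 2).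
rewrite !ball_itv /= !in_itv /=.
by case: (ltP (i.1 + i.2) (j.1 + j.2)) => h; split; apply/andP; split; lra.
Qed.

Section monotone.
Context {R : realType}.
Variables (f : R -> R) (r s : R).
Hypothesis f_nd : forall x y, r <= x -> x <= y -> y <= s -> f x <= f y.

Lemma sum_disjoint_ball_increments_le (D : seq (R * R)) t :
  uniq D -> r <= t <= s ->
  (forall j, j \in D -> [/\ 0 < j.2, r <= j.1 - j.2 & j.1 + j.2 <= t]) ->
  trivIset [set` D] (fun j => ball j.1 j.2) ->
  \sum_(j <- D) (f (j.1 + j.2) - f (j.1 - j.2)) <= f t - f r.
Proof.
move sizeD : (size D) => n; elim: n D sizeD t => [|n IH] D sizeD t uD.
  by move=> /andP[rt ts] _ _; rewrite (size0nil sizeD) big_nil subr_ge0 f_nd.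
move=> /andP[rt ts] Dt trivD.
have D_neq0 : D != [::] by rewrite -size_eq0 sizeD.
have [j jD jmax] := exists_argmax_seq (fun i : R * R => i.1 - i.2) _ D_neq0.
have [j2_gt0 rj jt] := Dt j jD.
pose D' := rem j D.
have D'D i : i \in D' -> i != j /\ i \in D.
  by rewrite mem_rem_uniq // => /andP[].
have D'left i : i \in D' -> i.1 + i.2 <= j.1 - j.2.
  move=> /D'D[ij iD]; apply: disjoint_balls_le => //; first exact: jmax.
  by move/(trivD i j iD jD)/eqP; rewrite (negbTE ij).
have sumD' : \sum_(i <- D') (f (i.1 + i.2) - f (i.1 - i.2))
    <= f (j.1 - j.2) - f r.
  apply: IH; rewrite ?rem_uniq ?size_rem ?sizeD //.
  - by apply/andP; split; lra.
  - move=> i iD'; have [i2_gt0 ri _] := Dt i (D'D i iD').2.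
    by split => //; exact: D'left.
  - by apply: sub_trivIset trivD => i /= /D'D[].
rewrite (big_rem j jD) /=.
have : f (j.1 + j.2) <= f t by apply: f_nd; lra.
lra.
Qed.

Variable lam : R.

Definition steep_ball (i : R * R) : Prop :=
  [/\ 0 < i.2, r <= i.1 - i.2, i.1 + i.2 <= s
    & lam * (i.2 *+ 2) < f (i.1 + i.2) - f (i.1 - i.2)].

Definition steep_set : set R := \bigcup_(i in steep_ball) ball i.1 i.2.

Lemma itv_sub_steep_set u v : r <= u -> v <= s ->
  lam * (v - u) < f v - f u -> [set` `]u, v[] `<=` steep_set.
Proof.
move=> ru vs steep_uv x /=; rewrite in_itv /= => /andP[ux xv].
exists ((u + v) / 2, (v - u) / 2); last first.
  by rewrite ball_itv /= in_itv /=; apply/andP; split; lra.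
rewrite /steep_ball /=.
have -> : (u + v) / 2 + (v - u) / 2 = v by field.
have -> : (u + v) / 2 - (v - u) / 2 = u by field.
have -> : (v - u) / 2 *+ 2 = v - u by rewrite -mulr_natr; field.
by split => //=; lra.
Qed.

Lemma increment_le_outside_steep_set a u v : 0 <= lam ->
  r < a < s -> ~ steep_set a ->
  r <= u <= a -> a <= v <= s -> f v - f u <= lam * (v - u).
Proof.
move=> lam_ge0 /andP[ra as_] a_notin /andP[ru ua] /andP[av vs].
rewrite leNgt; apply/negP => steep_uv; apply: a_notin.
pose g := f v - f u - lam * (v - u).
pose d := Num.min (Num.min (a - r) (s - a)) (g / (2 * lam + 1)).
have d_gt0 : 0 < d.
  rewrite !lt_min !subr_gt0 ra as_ /=; apply: divr_gt0; rewrite /g.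
  - by rewrite subr_gt0.
  - lra.
have [d_ar d_sa] : d <= a - r /\ d <= s - a by rewrite !ge_min !lexx ?orbT.
have lam_d : 2 * lam * d < g.
  have : d <= g / (2 * lam + 1) by rewrite ge_min lexx orbT.
  rewrite ler_pdivlMr; [nra | lra].
(* Since 2 λ d < g, widening [u, v] by at most d on each side keeps its
   increment above λ times its length, and puts a strictly inside it. *)
pose u' := Num.min u (a - d); pose v' := Num.max v (a + d).
have [u'_le_u u'_le_ad] : u' <= u /\ u' <= a - d.
  by rewrite !ge_min !lexx ?orbT.
have [r_le_u' u'_ge] : r <= u' /\ u - d <= u'.
  by rewrite !le_min; split; apply/andP; split; lra.
have [v'_ge_v v'_ge_ad] : v <= v' /\ a + d <= v'.
  by rewrite !le_max !lexx ?orbT.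
have [v'_le_s v'_le] : v' <= s /\ v' <= v + d.
  by rewrite !ge_max; split; apply/andP; split; lra.
have fu' : f u' <= f u by apply: f_nd; lra.
have fv' : f v <= f v' by apply: f_nd; lra.
apply: (itv_sub_steep_set _ _ r_le_u' v'_le_s _ a); last first.
  by rewrite /= in_itv /=; apply/andP; split; lra.
rewrite /g in lam_d; nra.
Qed.

Lemma difference_quotients_le_outside_steep_set a : 0 <= lam ->
  r < a < s -> ~ steep_set a ->
  (forall t, r <= t -> t < a -> (f a - f t) / (a - t) <= lam) /\
  (forall t, a < t -> t <= s -> (f t - f a) / (t - a) <= lam).
Proof.
move=> lam_ge0 ras a_notin; have /andP[ra as_] := ras.
split=> t t1 t2; rewrite ler_pdivrMr ?subr_gt0 //;
  by apply: (increment_le_outside_steep_set _ _ _ lam_ge0 ras a_notin);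
  apply/andP; split; lra.
Qed.

Lemma steep_set0 : 0 <= lam -> f s <= f r -> steep_set = set0.
Proof.
move=> lam_ge0 fsr; apply/seteqP; split => // x [i [i2_gt0 ri is_ steep_i] _].
have : f (i.1 + i.2) <= f s by apply: f_nd; lra.
have : f r <= f (i.1 - i.2) by apply: f_nd; lra.
have : 0 <= lam * (i.2 *+ 2) by rewrite mulr_ge0 // mulrn_wge0 // ltW.
lra.
Qed.

Lemma steep_sum_diameters_le (D : seq (R * R)) : r <= s -> uniq D ->
  (forall i, i \in D -> steep_ball i) ->
  trivIset [set` D] (fun i => ball i.1 i.2) ->
  lam * \sum_(i <- D) i.2 *+ 2 <= f s - f r.
Proof.
move=> rs uD Dsteep trivD; rewrite mulr_sumr.
apply: le_trans (sum_disjoint_ball_increments_le _ s uD _ _ trivD).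
- by rewrite big_seq [leRHS]big_seq; apply: ler_sum => i /Dsteep[_ _ _ /ltW].
- by rewrite rs lexx.
- by move=> i /Dsteep[].
Qed.

Lemma compact_steep_measure_le K : 0 < lam -> r <= s -> compact K ->
  K `<=` steep_set -> (lebesgue_measure K <= (3 * (f s - f r) / lam)%:E)%E.
Proof.
move=> lam_gt0 rs cK Ksteep.
(* Vitali's lemma needs a nonempty ball for every index. *)
pose B (i : R * R) := ball i.1 (if 0 < i.2 then i.2 else 1).
have BE i : steep_ball i -> B i = ball i.1 i.2 by rewrite /B => -[->].
have B_neq0 i : B i !=set0 by exists i.1; apply: ballxx; case: ifP.
have [D' D'steep KD'] : finite_subset_cover steep_ball B K.
  move: cK; rewrite compact_cover; apply=> [i _|x /Ksteep[i steep_i]].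
    exact: ball_open.
  by rewrite -BE // => ?; exists i.
have [D [uD DD' trivD KD]] := vitali_lemma_finite_cover
  (fun i => is_ball_ball i.1 _) B_neq0 (finmap.enum_fset D').
have Dsteep i : i \in D -> steep_ball i.
  by move=> /DD' /D'steep; rewrite in_setE.
have trivD' : trivIset [set` D] (fun i => ball i.1 i.2).
  by move=> i j iD jD; rewrite -!BE; [exact: trivD|exact: Dsteep..].
have K_cover : K `<=` \bigcup_(i in [set` D]) ball i.1 (3 * i.2).
  move=> x /KD' /KD [i /= iD]; rewrite -/(B i) BE ?scale_ballE //.
    by exists i.
  exact: Dsteep.
apply: (le_trans (content_sub_fsum lebesgue_measure (finite_seq D) _
  (compact_measurable cK) K_cover)) => [i _|]; first exact: measurable_ball.
rewrite -fsbig_seq // (eq_big_seq (fun i => ((3 * i.2) *+ 2)%:E)); last first.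
  move=> i /Dsteep[i2_gt0 _ _ _].
  by apply: lebesgue_measure_ball; rewrite mulr_ge0 // ltW.
rewrite sumEFin lee_fin ler_pdivlMr //.
under eq_bigr do rewrite -mulrnAr; rewrite -mulr_sumr.
have := steep_sum_diameters_le _ rs uD Dsteep trivD'; nra.
Qed.

Lemma steep_set_measure_le c : 0 < c -> lam = c * (f s - f r) -> r <= s ->
  (lebesgue_measure steep_set <= (3 / c)%:E)%E.
Proof.
move=> c_gt0 lamE rs; have fr_fs : f r <= f s by apply: f_nd; rewrite ?lexx.
have [fs_fr|fs_gt] := leP (f s) (f r).
  have lam0 : lam = 0 by rewrite lamE (_ : f s - f r = 0) ?mulr0 //; lra.
  by rewrite steep_set0 ?lam0 // measure0 lee_fin divr_ge0 // ltW.
have lam_gt0 : 0 < lam by rewrite lamE mulr_gt0 // subr_gt0.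
have -> : 3 / c = 3 * (f s - f r) / lam.
  by rewrite lamE; field; apply/andP; split; apply/eqP; lra.
rewrite lebesgue_regularity_inner_sup; last first.
  by apply: open_measurable; apply: bigcup_open => i _; exact: ball_open.
by apply: ge_ereal_sup => _ [K [cK Ksteep] <-]; exact: compact_steep_measure_le.
Qed.

End monotone.

Lemma exists_itv_notin_setU {R : realType} (A B : set R) (p q : R) :
  (Lmeasure A + Lmeasure B < (q - p)%:E)%E ->
  exists x, [/\ p < x, x < q, ~ A x & ~ B x].
Proof.
move=> AB_small; apply: contrapT => none.
have itv_sub : [set` `]p, q[] `<=` A `|` B.
  move=> x /=; rewrite in_itv /= => /andP[px xq].
  by apply: contrapT => /not_orP[nA nB]; apply: none; exists x.
have itv_len : ((q - p)%:E <= lebesgue_measure [set` `]p, q[])%E.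
  rewrite lebesgue_measure_itv /= lte_fin -EFinD.
  by case: ltP => pq; rewrite lee_fin; lra.
(* [Lmeasure] unfolds to the outer measure [(wlength idfun)^*]. *)
have := le_trans itv_len (le_outer_measure (wlength idfun)^*%mu _ _ itv_sub).
move=> /le_trans /(_ (outer_measureU2 _ A B)).
by rewrite leNgt AB_small.
Qed.

Theorem lemma3p5 (R : realType) (r s θ : R) (f : R -> R)
  (hr : 0 < r) (hrs : r < s) (hθ0 : 0 <= θ) (hθ1 : θ < 8^-1)
  (f_nd : forall x y, r <= x -> x <= y -> y <= s -> f x <= f y)
  (f_rc : forall x, r <= x -> x < s -> f y @[y --> x^'+] --> f x)
  (E : set R) (mE : Lmeasurable E) (Esub : E `<=` `[r, s])
  (Esmall : (Lmeasure E < (θ * (s - r))%:E)%E) :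
  exists rt st : R,
    [/\ [/\ r < rt, rt < st & st < s], ~ E rt, ~ E st,
      (forall a, a = rt \/ a = st ->
        (forall τ, r <= τ -> τ < a ->
           (f a - f τ) / (a - τ) <= 800 / (1 - 8 * θ) * ((f s - f r) / (s - r))) /\
        (forall τ, a < τ -> τ <= s ->
           (f τ - f a) / (τ - a) <= 800 / (1 - 8 * θ) * ((f s - f r) / (s - r))))
    & st - rt <= s - r /\ s - r <= 8 * (st - rt)].
Proof.
have θ8 : 8 * θ < 1 by rewrite mulrC -ltr_pdivlMr // div1r.
pose c := 800 / ((1 - 8 * θ) * (s - r)).
have c_gt0 : 0 < c by apply: divr_gt0; [|apply: mulr_gt0]; lra.
pose lam := 800 / (1 - 8 * θ) * ((f s - f r) / (s - r)).
have lamE : lam = c * (f s - f r).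
  by rewrite /lam /c; field; apply/andP; split; apply/eqP; lra.
have lam_ge0 : 0 <= lam.
  rewrite lamE; apply: mulr_ge0; first exact: ltW.
  by rewrite subr_ge0; apply: f_nd; lra.
pose H := steep_set f r s lam.
(* [Lmeasure] and [lebesgue_measure] are both the Lebesgue outer measure. *)
have H_small : (Lmeasure H <= (3 / c)%:E)%E :=
  steep_set_measure_le _ _ _ f_nd _ _ c_gt0 lamE (ltW hrs).
have EH_small : (Lmeasure E + Lmeasure H < ((s - r) / 4)%:E)%E.
  apply: lt_le_trans (lte_leD _ Esmall H_small) _.
    by rewrite ge0_fin_numE ?measure_ge0 // (le_lt_trans H_small) ?ltey.
  rewrite -EFinD lee_fin /c invf_div; nra.
have [rt [r_rt rt_lt nE_rt nH_rt]] :
    exists x, [/\ r < x, x < r + (s - r) / 4, ~ E x & ~ H x].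
  by apply: exists_itv_notin_setU; rewrite (_ : _ - r = (s - r) / 4) //; ring.
have [st [st_gt st_s nE_st nH_st]] :
    exists x, [/\ s - (s - r) / 4 < x, x < s, ~ E x & ~ H x].
  by apply: exists_itv_notin_setU; rewrite (_ : s - _ = (s - r) / 4) //; ring.
have quotients_le a : r < a < s -> ~ H a -> _ :=
  difference_quotients_le_outside_steep_set _ _ _ f_nd _ a lam_ge0.
exists rt, st; split => //; first by split; lra.
- by move=> a [->|->]; apply: quotients_le => //; apply/andP; split; lra.
- by split; lra.
Qed.
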